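(* Let $G$ be a closed graph on a compact metrizable space $X$. Then: (a) $P_G$ is $\sigma$-centered iff $\chi(G)\leq\aleph_0$; (b) $P_G$ is $\sigma$-liminf-centered iff $\lambda(G)\leq\aleph_0$.
   Context: A graph $G$ on $X$ is a symmetric irreflexive relation, closed if closed in $(X\times X)\setminus$ diagonal. A $G$-anticlique is a set with no two distinct $G$-connected points; $\chi(G)$ is the least size of a family of $G$-anticliques covering $X$. A set $A\subset X$ is $G$-loose if every $x\in X$ has an open neighborhood containing no elements of $A$ that are $G$-connected to $x$; $\lambda(G)$ is the least size of a family of $G$-loose sets covering $X$. $P_G$ is the poset of pairs $p=\langle a_p,o_p\rangle$ with $a_p\subset X$ a finite $G$-anticlique and $o_p\supset a_p$ open, ordered by $q\leq p$ iff $a_p\subset a_q$ and $o_q\subset o_p$. For a poset $P$, a set $A\subset P$ is centered if every finite $b\subset A$ has a common lower bound in $P$; $P$ is $\sigma$-centered if it is a countable union of centered sets. A set $A\subset P$ is liminf centered if for every sequence $\langle p_i\colon i\in\omega\rangle$ of elements of $A$ there is $q\in P$ such that for every $r\leq q$ the set $\{i\in\omega\colon p_i$ is compatible with $r\}$ is infinite; $P$ is $\sigma$-liminf-centered if it is a countable union of liminf centered sets. *)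

From HB Require Import structures.
From mathcomp Require Import all_boot all_order all_algebra.
From mathcomp Require Import all_classical all_reals topology normedtype.
Set Implicit Arguments. Unset Strict Implicit. Unset Printing Implicit Defensive.
Import numFieldNormedType.Exports.
Local Open Scope classical_set_scope.

Section Defs.
Context {X : topologicalType}.

Definition is_graph (G : X -> X -> Prop) : Prop :=
  (forall x y, G x y -> G y x) /\ (forall x, ~ G x x).

(* closed in (X x X) minus the diagonal (subspace topology) *)
Definition closed_graph (G : X -> X -> Prop) : Prop :=
  is_graph G /\
  closure [set p : X * X | G p.1 p.2] `&` [set p | p.1 <> p.2]
    `<=` [set p | G p.1 p.2].

Definition anticlique (G : X -> X -> Prop) (A : set X) : Prop :=
  forall x y, A x -> A y -> x <> y -> ~ G x y.

Definition loose (G : X -> X -> Prop) (A : set X) : Prop :=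
  forall x : X, exists U : set X,
    open U /\ U x /\ (forall a, A a -> U a -> ~ G x a).

Definition chi_countable (G : X -> X -> Prop) : Prop :=
  exists A : nat -> set X,
    (forall n, anticlique G (A n)) /\ \bigcup_n A n = setT.

Definition lambda_countable (G : X -> X -> Prop) : Prop :=
  exists A : nat -> set X,
    (forall n, loose G (A n)) /\ \bigcup_n A n = setT.

(* The poset P_G: conditions p = (a_p, o_p) *)
Definition PG (G : X -> X -> Prop) : set (set X * set X) :=
  [set p | finite_set p.1 /\ anticlique G p.1 /\ open p.2 /\ p.1 `<=` p.2].

Definition PG_le (q p : set X * set X) : Prop :=
  p.1 `<=` q.1 /\ q.2 `<=` p.2.

Definition PG_compatible (G : X -> X -> Prop) (p q : set X * set X) : Prop :=
  exists r, PG G r /\ PG_le r p /\ PG_le r q.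

Definition centered (G : X -> X -> Prop) (A : set (set X * set X)) : Prop :=
  forall b : set (set X * set X), finite_set b -> b `<=` A ->
    exists q, PG G q /\ forall p, b p -> PG_le q p.

Definition sigma_centered (G : X -> X -> Prop) : Prop :=
  exists C : nat -> set (set X * set X),
    (forall n, C n `<=` PG G) /\ (forall n, centered G (C n)) /\
    \bigcup_n C n = PG G.

Definition liminf_centered (G : X -> X -> Prop) (A : set (set X * set X)) : Prop :=
  forall p : nat -> set X * set X, (forall i, A (p i)) ->
    exists q, PG G q /\
      forall r, PG G r -> PG_le r q ->
        infinite_set [set i : nat | PG_compatible G (p i) r].

Definition sigma_liminf_centered (G : X -> X -> Prop) : Prop :=
  exists C : nat -> set (set X * set X),
    (forall n, C n `<=` PG G) /\ (forall n, liminf_centered G (C n)) /\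
    \bigcup_n C n = PG G.

End Defs.

From HB Require Import structures.
From mathcomp Require Import all_boot all_order all_algebra.
From mathcomp Require Import all_classical all_reals topology normedtype.
From mathcomp Require Import finmap interval_inference.
Import Order.TTheory GRing.Theory Num.Theory.
Local Open Scope classical_set_scope.
Set Implicit Arguments. Unset Strict Implicit. Unset Printing Implicit Defensive.

(* If P_G is covered by countably many centred (resp. liminf centred) pieces C_n, the
   sets {x | ({x}, X) in C_n} cover X and are anticliques (resp. loose).  For looseness
   at z, take neighbours a_i -> z of z with ({a_i}, X) in C_n and a liminf witness q:
   if z is in a_q, a common extension of q and some ({a_i}, X) contains the edge z a_i;
   otherwise, shrinking o_q away from a neighbourhood of z leaves it compatible with
   only finitely many ({a_i}, X).
   Conversely, fix a countable base B whose closures refine neighbourhoods and a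
   countable cover of X by anticliques (resp. loose sets) A_n.  Every condition p lies
   in one of countably many classes, obtained by choosing for each point of a_p a
   colour n and basic sets with closure B_k in B_k' in o_p, such that no edge joins
   the closures of the B_k of distinct points.  In a class, the union of the a_p
   and the union of the B_k' form a common lower bound; for loose colours, a cluster
   point of enumerations of the a_(p_i) (Tychonoff) together with the union of the
   B_k' is a liminf witness: by looseness of the colours and closedness of G, near
   that point the enumerations span no edge to the points of a condition below it. *)

Lemma infinite_nat_setP (S : set nat) :
  infinite_set S <-> forall P : set nat, (\forall i \near \oo, P i) -> S `&` P !=set0.
Proof.
split=> [Sinf P [N _ PN] | SP Sfin].
  apply: contrapT => SP0; apply: Sinf.
  apply: (sub_finite_set _ (finite_II N)) => i Si /=; rewrite ltnNge.
  by apply/negP => Ni; apply: SP0; exists i; split => //; apply: PN.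
have [D SD] := finite_fsetP.1 Sfin.
have [|i [+ /= Mi]] := SP [set i | (\max_(j <- D) j).+1 <= i].
  by exists (\max_(j <- D) j).+1.
by rewrite SD => Di; move: Mi; rewrite ltnNge (@leq_bigmax_seq _ _ xpredT id i).
Qed.

Lemma compact_cluster_seq (T : topologicalType) (F : nat -> T) :
  compact [set: T] ->
  exists y : T, forall N, nbhs y N -> infinite_set [set i | N (F i)].
Proof.
move=> cT; have [y [_ Fy]] := cT (F @ \oo) _ filterT.
exists y => N yN; apply/infinite_nat_setP => P evP.
have FP : (F @ \oo) (F @` P) by apply: filterS evP => i Pi; exists i.
by have [_ [[i Pi <-] NFi]] := Fy _ _ FP yN; exists i.
Qed.

Lemma regular_closure_nbhs (T : topologicalType) (x : T) (U : set T) :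
  regular_space T -> nbhs x U -> exists2 D, nbhs x D & closure D `<=` U.
Proof. by move=> /(_ x U) + xU => /(_ xU) [D xD DU]; exists D. Qed.

Lemma countable_family_nat (T : Type) (I : countType) (F : I -> set T)
    (P : set T -> Prop) :
  P set0 -> (forall i, P (F i)) ->
  exists C : nat -> set T, (forall n, P (C n)) /\ \bigcup_n C n = \bigcup_i F i.
Proof.
move=> P0 PF.
exists (fun n => if choice.unpickle n is Some i then F i else set0); split.
  by move=> n; case: choice.unpickle.
apply/seteqP; split=> [x [n _]|x [i _ Fix]].
  by case: choice.unpickle => // i Fix; exists i.
by exists (choice.pickle i) => //; rewrite choice.pickleK.
Qed.

(* [compact_cover] needs a pointed space; the empty space is covered trivially. *)
Lemma compact_finite_subcover (T : topologicalType) (f : T -> set T) :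
  compact [set: T] -> (forall x, open (f x)) -> (forall x, f x x) ->
  exists D : {fset T}, forall y, exists2 c, c \in D & f c y.
Proof.
move=> cT fo fx; have [[x0 _]|T0] := pselect (exists x : T, True); last first.
  by exists fset0 => y; case: T0; exists y.
pose Tp : ptopologicalType := HB.pack T (isPointed.Build T x0).
have : @compact Tp [set: Tp] by [].
rewrite compact_cover => /(_ T setT f) [c _|x _|D _ Dcov]; first exact: fo.
  by exists x.
by exists D => y; have [c Dc fcy] := Dcov y I; exists c.
Qed.

Lemma compact_countable_regular_base (R : realType) (X : pseudoMetricType R) :
  compact [set: X] ->
  exists B : nat * nat -> set X, (forall k, open (B k)) /\
    forall x U, nbhs x U -> exists2 k, B k x & closure (B k) `<=` U.
Proof.
move=> cX; pose r n : R := (n.+1%:R^-1)%R.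
have r_gt0 n : (0 < r n)%R by rewrite invr_gt0 ltr0Sn.
have finite_net n : exists s : seq X, forall x, exists2 c, c \in s & (ball c (r n))° x.
  have [E Ecov] := @compact_finite_subcover _ (fun c => (ball c (r n))°) cX
    (fun c => open_interior _) (fun c => nbhsx_ballx c _ (r_gt0 n)).
  by exists E.
have [D Dcov] := choice finite_net.
exists (fun k => if onth (D k.1) k.2 is Some c then (ball c (r k.1))° else set0).
split=> [[n i] /=|x U xU].
  by case: onth => [c|]; [exact: open_interior | exact: open0].
have [V xV VU] := regular_closure_nbhs uniform_regular xU.
have [e e_gt0 xeV] := (nbhs_ballP _ _).1 xV.
have e2_gt0 : (0 < e / 2)%R by rewrite divr_gt0.
have [n _ /(_ n (leqnn n)) rne] := near_infty_natSinv_lt (PosNum e2_gt0).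
have [c cD xc] := Dcov n x; have [i Di] := onthP cD.
exists (n, i); rewrite /= Di //.
apply: subset_trans VU; apply: closureS => y yc; apply: xeV.
rewrite [e]splitr; apply: (@ball_triangle _ _ c).
  by apply: ball_sym; apply: (le_ball (ltW rne)); exact: interior_subset.
by apply: (le_ball (ltW rne)); exact: interior_subset.
Qed.

Lemma closure_cvg_seq (R : realType) (X : pseudoMetricType R) (P : set X) (z : X) :
  closure P z -> exists2 a : nat -> X, (forall i, P (a i)) & a @ \oo --> z.
Proof.
move=> Pz; pose r i : R := (i.+1%:R^-1)%R.
have r_gt0 i : (0 < r i)%R by rewrite invr_gt0 ltr0Sn.
have [a Ha] := choice (fun i => Pz _ (nbhsx_ballx z _ (r_gt0 i))).
exists a => [i|U /(nbhs_ballP _ _).1 [e e_gt0 zeU]]; first by have [] := Ha i.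
have [N _ rN] := near_infty_natSinv_lt (PosNum e_gt0).
exists N => // i /rN ri; apply/zeU/(le_ball (ltW ri)).
by have [] := Ha i.
Qed.

Section Graph.
Context {X : topologicalType} (G : X -> X -> Prop).

Lemma closed_graph_sep : closed_graph G -> forall x y, x <> y -> ~ G x y ->
  exists U V, [/\ nbhs x U, nbhs y V & forall u v, U u -> V v -> ~ G u v].
Proof.
move=> [_ Gcl] x y xy nGxy; apply: contrapT => noUV.
apply/nGxy/(Gcl (x, y)); split => //= W [[U V] /= [xU yV] UVW].
apply: contrapT => noG; apply: noUV; exists U, V; split => // u v Uu Vv Guv.
by apply: noG; exists (u, v); split => //; apply: UVW.
Qed.

Lemma closed_graph_sep_family (m : nat) (f : 'I_m -> X) :
  closed_graph G -> injective f -> anticlique G (range f) ->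
  exists U : 'I_m -> set X, (forall j, nbhs (f j) (U j)) /\
    forall j l, j != l -> forall u v, U j u -> U l v -> ~ G u v.
Proof.
move=> hG finj fA.
have sep (jl : 'I_m * 'I_m) : exists UV : set X * set X, jl.1 != jl.2 ->
    [/\ nbhs (f jl.1) UV.1, nbhs (f jl.2) UV.2 &
        forall u v, UV.1 u -> UV.2 v -> ~ G u v].
  have [_|jl_neq] := eqVneq jl.1 jl.2; first by exists (setT, setT).
  have fjl : f jl.1 <> f jl.2 by move/finj/eqP; rewrite (negbTE jl_neq).
  have [U [V [xU yV UV]]] :=
    closed_graph_sep hG fjl (fA _ _ (imageT _ _) (imageT _ _) fjl).
  by exists (U, V).
have [S HS] := choice sep.
exists (fun j => [set u | forall l,
  (j != l -> (S (j, l)).1 u) /\ (l != j -> (S (l, j)).2 u)]).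
split=> [j|j l jl u v Uu Vv]; last first.
  by have [_ _] := HS (j, l) jl; apply; [exact: (Uu l).1 | exact: (Vv j).2].
apply: filter_forall => l; have [<-|jl] := eqVneq j l.
  by apply: nearW => u; split.
have [jU _ _] := HS (j, l) jl; have [_ jV _] := HS (l, j) (contra_neq esym jl).
by apply: filterI; [apply: filterS jU | apply: filterS jV] => u Su _.
Qed.

Lemma PG_set0 : PG G (set0, set0).
Proof.
split; first exact: finite_set0.
by split; [move=> ? ? | split; [exact: open0 |]].
Qed.

Lemma PG_singleton x : PG G ([set x], setT).
Proof.
split; first exact: finite_set1.
by split; [move=> a b /= -> -> | split; [exact: openT | move=> a]].
Qed.

Lemma PG_compatible_union p r : is_graph G -> PG G p -> PG G r ->
  p.1 `<=` r.2 -> r.1 `<=` p.2 ->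
  (forall x z, p.1 x -> r.1 z -> x <> z -> ~ G z x) -> PG_compatible G p r.
Proof.
move=> [Gsym _] [pfin [pA [po pao]]] [rfin [rA [ro rao]]] pr rp pr_nonadj.
exists (p.1 `|` r.1, p.2 `&` r.2); split; last first.
  by split; split=> x /=; [exact: or_introl | case | exact: or_intror | case].
split; first by rewrite finite_setU.
split; last by split; [exact: openI | move=> x [px|rx]; split; auto].
move=> x z [px|rx] [pz|rz] xz.
- exact: pA.
- by move/Gsym; apply: pr_nonadj.
- by apply: pr_nonadj => // zx; apply: xz.
- exact: rA.
Qed.

Lemma PG_compatible_singleton a r : PG_compatible G ([set a], setT) r ->
  r.2 a /\ forall z, r.1 z -> z <> a -> ~ G z a.
Proof.
move=> [s [[_ [sA [_ sas]]] [[/= sa _] [rs sr]]]].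
by split=> [|z rz]; [apply/sr/sas/sa | exact: sA (rs _ rz) (sa a erefl)].
Qed.

Lemma bigcup_singletons (C : nat -> set (set X * set X)) :
  \bigcup_n C n = PG G -> \bigcup_n [set x | C n ([set x], setT)] = setT.
Proof.
move=> Ccov; apply/seteqP; split => // x _.
have : (\bigcup_n C n) ([set x], setT) by rewrite Ccov; exact: PG_singleton.
by move=> [n _ Cx]; exists n.
Qed.

Lemma centered_singletons_anticlique (C : set (set X * set X)) :
  centered G C -> anticlique G [set x | C ([set x], setT)].
Proof.
move=> Ccen x y Cx Cy xy.
have [|q [[_ [qA _]] Hq]] := Ccen _ (finite_set2 ([set x], setT) ([set y], setT)).
  by move=> p [->|->].
have [qx _] := Hq _ (or_introl erefl); have [qy _] := Hq _ (or_intror erefl).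
exact: qA (qx x erefl) (qy y erefl) xy.
Qed.

End Graph.

Lemma finite_set_enum (T : choiceType) (A : set T) :
  finite_set A -> exists m (f : 'I_m -> T), injective f /\ A = range f.
Proof.
move=> /finite_fsetP [S ->]; exists (size S), (tnth (in_tuple S)); split.
  exact/tuple_uniqP/fset_uniq.
apply/seteqP; split=> [x /= /(tnthP (in_tuple S)) [j ->]|_ [j _ <-]]; first by exists j.
exact: mem_tnth.
Qed.

Lemma loose_near_nonadjacent {X : topologicalType} (G : X -> X -> Prop)
    (A S : set X) (x : X) :
  closed_graph G -> loose G A -> finite_set S -> anticlique G S -> S x ->
  \forall u \near x, A u -> forall z, S z -> z <> u -> ~ G z u.
Proof.
move=> hG Aloose /finite_fsetP [D ->] DA Dx.
suff : \forall u \near x, forall z : D, A u -> val z <> u -> ~ G (val z) u.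
  by apply: filterS => u Hu Au z zD; exact: Hu [` zD]%fset Au.
apply: filter_forall => -[z /= zD]; have [<-|zx] := pselect (z = x).
  have [U [oU [Uz UA]]] := Aloose z.
  by apply: (filterS _ (open_nbhs_nbhs (conj oU Uz))) => u Uu Au _; exact: UA.
have [U [V [zU xV UV]]] := closed_graph_sep hG zx (DA _ _ zD Dx zx).
by apply: (filterS _ xV) => u Vu _ _; exact: UV (nbhs_singleton zU) Vu.
Qed.

Section Classes.
Context {X : topologicalType} (G : X -> X -> Prop) (K : countType) (B : K -> set X)
  (A : nat -> set X).
Hypothesis B_open : forall k, open (B k).

(* A class is given by [m] slots: the [j]-th point of [a_p] has colour [col j]
   and lies in [B (inner j)], whose closure sits in [B (outer j)], inside [o_p]. *)
Definition PG_class (m : nat) (col : 'I_m -> nat) (inner outer : 'I_m -> K) :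
    set (set X * set X) :=
  [set p | [/\ PG G p,
    forall j l, j != l -> forall u v,
      closure (B (inner j)) u -> closure (B (inner l)) v -> ~ G u v,
    forall j, closure (B (inner j)) `<=` B (outer j),
    forall j, B (outer j) `<=` p.2 &
    exists f : 'I_m -> X, p.1 = range f /\
      forall j, A (col j) (f j) /\ B (inner j) (f j)]].

Lemma PG_class_cover : closed_graph G -> \bigcup_n A n = setT ->
  (forall x U, nbhs x U -> exists2 k, B k x & closure (B k) `<=` U) ->
  forall p, PG G p -> exists m col inner outer, @PG_class m col inner outer p.
Proof.
move=> hG Acov Bbase [a o] pPG; case: (pPG) => /= afin [aA [oo ao]].
have [m [f [finj af]]] := finite_set_enum afin; subst a.
have [U [fU Usep]] := closed_graph_sep_family hG finj aA.
have slot j : exists c : nat * K * K, [/\ A c.1.1 (f j), B c.1.2 (f j),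
    closure (B c.1.2) `<=` B c.2 & B c.2 `<=` U j `&` o].
  have [n _ An] : (\bigcup_n A n) (f j) by rewrite Acov.
  have fo : nbhs (f j) o by apply: open_nbhs_nbhs; split=> //; exact/ao/imageT.
  have [k' fk' k'Uo] := Bbase _ _ (filterI (fU j) fo).
  have [k fk kk'] := Bbase _ _ (open_nbhs_nbhs (conj (B_open k') fk')).
  by exists (n, k, k'); split => //; exact: subset_trans (@subset_closure _ _) k'Uo.
have [c Hc] := choice slot.
exists m, (fun j => (c j).1.1), (fun j => (c j).1.2), (fun j => (c j).2); split => //.
- move=> j l jl u v ju lv; have [_ _ jcl jU] := Hc j; have [_ _ lcl lU] := Hc l.
  exact: Usep jl _ _ (jU _ (jcl _ ju)).1 (lU _ (lcl _ lv)).1.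
- by move=> j; case: (Hc j).
- by move=> j; case: (Hc j) => _ _ _ jUo u /jUo [].
- by exists f; split=> // j; case: (Hc j).
Qed.

Lemma PG_class_centered (m : nat) (col : 'I_m -> nat) (inner outer : 'I_m -> K) :
  (forall n, anticlique G (A n)) -> centered G (PG_class col inner outer).
Proof.
move=> Aanti b bfin bclass.
exists (\bigcup_(p in b) p.1, \bigcup_j B (outer j)); split; last first.
  move=> p bp; have [_ _ _ pout _] := bclass p bp.
  by split=> [x px|x [j _ /pout]] //; exists p.
split; first by apply: bigcup_finite => // p /bclass [[]].
split.
  move=> x y [p bp px] [p' bp' p'y] xy.
  have [_ sep _ _ [f [pf fA]]] := bclass p bp.
  have [_ _ _ _ [f' [p'f f'A]]] := bclass p' bp'.
  move: px p'y xy; rewrite pf p'f => -[j _ <-] [l _ <-].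
  case: (eqVneq j l) => [<-|jl] xy.
    by apply: (Aanti (col j)) xy; [exact: (fA j).1 | exact: (f'A j).1].
  exact: sep jl _ _ (subset_closure (fA j).2) (subset_closure (f'A l).2).
split; first by apply: bigcup_open => j _.
move=> x [p /bclass [_ _ cl_out _ [f [pf fA]]]]; rewrite pf => -[j _ <-].
by exists j => //; apply/cl_out/subset_closure; exact: (fA j).2.
Qed.

Import ArrowAsProduct.

Lemma PG_class_liminf_centered (m : nat) (col : 'I_m -> nat) (inner outer : 'I_m -> K) :
  closed_graph G -> compact [set: X] -> (forall n, loose G (A n)) ->
  liminf_centered G (PG_class col inner outer).
Proof.
move=> hG cX Aloose p pclass.
have enum_p i : exists f : 'I_m -> X,
    (p i).1 = range f /\ forall j, A (col j) (f j) /\ B (inner j) (f j).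
  by have [_ _ _ _] := pclass i.
have [F HF] := choice enum_p.
have cP : compact [set: 'I_m -> X].
  have := tychonoff (fun _ : 'I_m => cX).
  by congr compact; apply/seteqP; split.
have [y yF] := compact_cluster_seq F cP.
have yproj j U : nbhs (y j) U -> nbhs y [set g | U (g j)].
  exact: (@proj_continuous _ (fun _ => X) j y U).
have y_cl j : closure (B (inner j)) (y j).
  move=> U /yproj /yF /infinite_setN0 [i Ui].
  by exists (F i j); split=> //; exact: ((HF i).2 j).2.
have [_ sep cl_out _ _] := pclass 0.
have W_sub i : \bigcup_j B (outer j) `<=` (p i).2.
  by have [_ _ _ pout _] := pclass i; move=> x [j _ /pout].
exists (range y, \bigcup_j B (outer j)); split.
  split; first exact: finite_image.
  split.
    move=> _ _ [j _ <-] [l _ <-] yjl; apply: sep (y_cl j) (y_cl l).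
    by apply/eqP => jl; apply: yjl; rewrite jl.
  split; first by apply: bigcup_open => j _.
  by move=> _ [j _ <-]; exists j => //; exact/cl_out/y_cl.
move=> r rPG [yr rW]; have [rfin [rA [ro rsub]]] := rPG.
have yN : \forall g \near y, forall j, r.2 (g j) /\
    (A (col j) (g j) -> forall z, r.1 z -> z <> g j -> ~ G z (g j)).
  apply: (filter_forall (nbhs_filter y)) => j.
  apply: (yproj j [set x | r.2 x /\
    (A (col j) x -> forall z, r.1 z -> z <> x -> ~ G z x)]).
  apply: filterI.
    by apply: open_nbhs_nbhs; split=> //; apply/rsub/yr; exists j.
  exact: loose_near_nonadjacent hG (Aloose _) rfin rA (yr _ (imageT y j)).
apply: sub_infinite_set (yF _ yN) => i /= FiN.
have [pPG _ _ _ _] := pclass i.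
apply: (PG_compatible_union hG.1 pPG rPG).
- by rewrite (HF i).1 => _ [j _ <-]; exact: (FiN j).1.
- by move=> x /rsub /rW /W_sub.
- rewrite (HF i).1 => _ z [j _ <-] rz jz.
  by apply: (FiN j).2 rz _ => //; [exact: ((HF i).2 j).1 | move/esym].
Qed.

Lemma PG_class_sigma_cover (Q : set (set X * set X) -> Prop) :
  closed_graph G -> \bigcup_n A n = setT ->
  (forall x U, nbhs x U -> exists2 k, B k x & closure (B k) `<=` U) ->
  Q set0 -> (forall m col inner outer, Q (@PG_class m col inner outer)) ->
  exists C : nat -> set (set X * set X),
    (forall n, C n `<=` PG G) /\ (forall n, Q (C n)) /\ \bigcup_n C n = PG G.
Proof.
move=> hG Acov Bbase Q0 Qcls.
pose I := {m : nat & {ffun 'I_m -> nat} * {ffun 'I_m -> K} * {ffun 'I_m -> K}}%type.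
pose F (i : I) := PG_class (projT2 i).1.1 (projT2 i).1.2 (projT2 i).2.
have F_PG i : F i `<=` PG G by move=> p [].
have [C [CQ CF]] := countable_family_nat (F := F) (P := fun S => S `<=` PG G /\ Q S)
  (conj (@sub0set _ _) Q0) (fun i => conj (F_PG i) (Qcls _ _ _ _)).
exists C; split; first by move=> n; case: (CQ n).
split; first by move=> n; case: (CQ n).
rewrite CF; apply/seteqP; split=> [p [i _ /F_PG] //|p /(PG_class_cover hG Acov Bbase)].
move=> [m [col [inner [outer pclass]]]].
have ffunT T (g : 'I_m -> T) : fun_of_fin [ffun j => g j] = g.
  by apply/funext => j; rewrite ffunE.
exists (existT _ m ([ffun j => col j], [ffun j => inner j], [ffun j => outer j])) => //.
by rewrite /F /= !ffunT.
Qed.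

End Classes.

Lemma sigma_centered_chi_countable {X : topologicalType} (G : X -> X -> Prop) :
  sigma_centered G -> chi_countable G.
Proof.
move=> [C [_ [Ccen Ccov]]]; exists (fun n => [set x | C n ([set x], setT)]).
split; last exact: bigcup_singletons Ccov.
by move=> n; exact: centered_singletons_anticlique.
Qed.

Lemma chi_countable_sigma_centered (R : realType) (X : pseudoMetricType R)
    (G : X -> X -> Prop) :
  compact [set: X] -> closed_graph G -> chi_countable G -> sigma_centered G.
Proof.
move=> cX hG [A [Aanti Acov]].
have [B [Bo Bbase]] := compact_countable_regular_base cX.
apply: (PG_class_sigma_cover Bo hG Acov Bbase) => [b _ b0|m col inner outer].
  by exists (set0, set0); split=> [|p /b0]; first exact: PG_set0.
exact: PG_class_centered.
Qed.

Lemma liminf_centered_singletons_loose (R : realType) (X : pseudoMetricType R)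
    (G : X -> X -> Prop) (C : set (set X * set X)) :
  hausdorff_space X -> is_graph G -> liminf_centered G C ->
  loose G [set x | C ([set x], setT)].
Proof.
move=> hX [_ Girr] Clim z; apply: contrapT => not_loose.
have zcl : closure [set a | C ([set a], setT) /\ G z a] z.
  move=> U zU; apply: contrapT => noa; apply: not_loose.
  exists U°; split; first exact: open_interior.
  split=> // a Ca Ua Gza; apply: noa; exists a; split => //.
  exact: interior_subset.
have [a Ca a_z] := closure_cvg_seq zcl.
have [q [qPG qlim]] := Clim (fun i => ([set a i], setT)) (fun i => (Ca i).1).
have compat r U : PG G r -> PG_le r q -> nbhs z U -> exists i,
    [/\ U (a i), r.2 (a i) & forall w, r.1 w -> w <> a i -> ~ G w (a i)].
  move=> rPG rq zU; have [i [/PG_compatible_singleton [ra rna] Uai]] :=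
    (infinite_nat_setP _).1 (qlim r rPG rq) _ (a_z U zU).
  by exists i.
have za i : z <> a i by move=> zai; apply: (Girr z); rewrite {2}zai; exact: (Ca i).2.
have [qz|qz] := pselect (q.1 z).
  have [i [_ _]] := compat q setT qPG (conj (fun _ => id) (fun _ => id)) filterT.
  by move/(_ z qz (za i)); apply; exact: (Ca i).2.
have [qfin [qA [qo qsub]]] := qPG.
have qcl : closed q.1 := compact_closed hX (finite_compact qfin).
have zqC : nbhs z (~` q.1) by apply: open_nbhs_nbhs; split=> //; exact: closed_openC.
have [D zD Dq] := regular_closure_nbhs uniform_regular zqC.
have rPG : PG G (q.1, q.2 `&` ~` closure D).
  split=> //; split=> //; split; first exact/openI/closed_openC/closed_closure.
  by move=> x qx; split; [exact: qsub | move/Dq].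
have rq : PG_le (q.1, q.2 `&` ~` closure D) q by split=> // x [].
have [i [Dai [_ /= clDai] _]] := compat _ D rPG rq zD.
by apply: clDai; exact: subset_closure.
Qed.

Lemma sigma_liminf_lambda_countable (R : realType) (X : pseudoMetricType R)
    (G : X -> X -> Prop) :
  hausdorff_space X -> is_graph G -> sigma_liminf_centered G -> lambda_countable G.
Proof.
move=> hX hG [C [_ [Clim Ccov]]]; exists (fun n => [set x | C n ([set x], setT)]).
split; last exact: bigcup_singletons Ccov.
by move=> n; exact: liminf_centered_singletons_loose.
Qed.

Lemma lambda_countable_sigma_liminf (R : realType) (X : pseudoMetricType R)
    (G : X -> X -> Prop) :
  compact [set: X] -> closed_graph G -> lambda_countable G -> sigma_liminf_centered G.
Proof.
move=> cX hG [A [Aloose Acov]].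
have [B [Bo Bbase]] := compact_countable_regular_base cX.
apply: (PG_class_sigma_cover Bo hG Acov Bbase) => [p /(_ 0)//|m col inner outer].
exact: PG_class_liminf_centered.
Qed.

Theorem theorem3p7 (R : realType) (X : pseudoMetricType R)
  (hX : hausdorff_space X) (cX : compact [set: X])
  (G : X -> X -> Prop) (hG : closed_graph G) :
  (sigma_centered G <-> chi_countable G) /\
  (sigma_liminf_centered G <-> lambda_countable G).
Proof.
split; split.
- exact: sigma_centered_chi_countable.
- exact: chi_countable_sigma_centered.
- exact: sigma_liminf_lambda_countable hX hG.1.
- exact: lambda_countable_sigma_liminf.
Qed.
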